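(* Let $X\subset\mathbb R^n$, let $\alpha:[0,1]\to X$ be a parametrization of a line segment, and let $\beta:[0,1]\to X$ be any path with $\beta(0)=\alpha(0)$ and $\beta(1)=\alpha(1)$. Then $o(\alpha,(P,Q))\le o(\beta,(P,Q))$ for every pair $(P,Q)$ of distinct parallel hyperplanes. If in addition $\beta$ is not a reparametrization of $\alpha$, then there exists such a pair $(P,Q)$ with $o(\alpha,(P,Q))<o(\beta,(P,Q))$.
   Context: Let $g:\mathbb R^n\to[-1,1]$ depend only on $x_1$: $g=-1$ if $x_1\le-3$, $\frac12(x_1+1)$ if $-3\le x_1\le-1$, $0$ if $-1\le x_1\le1$, $\frac12(x_1-1)$ if $1\le x_1\le3$, $1$ if $x_1\ge3$. For distinct parallel hyperplanes $(P,Q)$, $g_{(P,Q)}=g\circ h_{(P,Q)}$ where $h_{(P,Q)}$ is a composition of a dilation, a rotation and a translation sending $P$ to $\{x_1=-3\}$ and $Q$ to $\{x_1=3\}$. For continuous $f:[a,b]\to\mathbb R^n$, the oscillation $o(f,(P,Q))$ is the supremum of $-\sum_{i=1}^k g_{(P,Q)}(f(a_{i-1}))g_{(P,Q)}(f(a_i))$ over finite collections $a\le a_0\le\dots\le a_k\le b$ (empty sums $=0$). *)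

From HB Require Import structures.
From mathcomp Require Import all_boot all_order all_algebra.
From mathcomp Require Import all_classical all_reals all_analysis.
Set Implicit Arguments. Unset Strict Implicit. Unset Printing Implicit Defensive.
Import Order.TTheory GRing.Theory Num.Theory.
Import numFieldNormedType.Exports.
Local Open Scope classical_set_scope.
Local Open Scope ring_scope.

Section Defs.
Variable R : realType.

(* The profile g : R^n -> [-1,1]; it depends only on x_1, so we give it on the first coordinate. *)
Definition gprof (x : R) : R :=
  if x <= -3 then -1
  else if x <= -1 then (x + 1) / 2
  else if x <= 1 then 0
  else if x <= 3 then (x - 1) / 2
  else 1.

Variable n : nat.
Notation pt := 'rV[R]_n.+1.

Definition coord1 (x : pt) : R := x ord0 ord0.

Definition dotv (x y : pt) : R := (x *m y^T) ord0 ord0.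

Definition distinct_parallel_hyperplanes (P Q : set pt) : Prop :=
  exists (v : pt) (a b : R), v != 0 /\ a != b /\
    P = [set x | dotv x v = a] /\ Q = [set x | dotv x v = b].

Definition orthogonal_mx (O : 'M[R]_n.+1) : Prop := O *m O^T = 1%:M.

Definition similarity (h : pt -> pt) : Prop :=
  exists (c : R) (O : 'M[R]_n.+1) (t : pt),
    0 < c /\ orthogonal_mx O /\ h = (fun x => c *: (x *m O) + t).

Definition normalizes (P Q : set pt) (h : pt -> pt) : Prop :=
  similarity h /\ h @` P = [set y | coord1 y = -3] /\ h @` Q = [set y | coord1 y = 3].

Definition gPQ (h : pt -> pt) (x : pt) : R := gprof (coord1 (h x)).

(* o(f, (P,Q)) for f : [a,b] -> R^(n+1), with g_(P,Q) = G; a finite collection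
   a <= a_0 <= ... <= a_k <= b is a sorted sequence s in [a,b]; the sum runs over
   consecutive pairs (empty when size s <= 1). *)
Definition oscillation (a b : R) (f : R -> pt) (G : pt -> R) : \bar R :=
  ereal_sup [set (\sum_(i < (size s).-1)
                     - (G (f (nth 0 s i)) * G (f (nth 0 s i.+1))))%:E
            | s in [set s : seq R | sorted <=%R s /\ all (fun t => a <= t <= b) s]].

Definition path_in (X : set pt) (f : R -> pt) : Prop :=
  {within `[0, 1], continuous f} /\ (forall t, t \in `[0, 1] -> X (f t)).

Definition segment (p q : pt) : set pt :=
  [set (1 - s) *: p + s *: q | s in `[0, 1]].

Definition segment_param (f : R -> pt) : Prop :=
  (exists p q : pt, f @` `[0, 1] = segment p q) /\
  (forall s t, s \in `[0, 1] -> t \in `[0, 1] -> f s = f t -> s = t).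

Definition reparam_of (beta alpha : R -> pt) : Prop :=
  exists phi : R -> R,
    {within `[0, 1], continuous phi} /\
    (forall s t, s \in `[0, 1] -> t \in `[0, 1] -> s <= t -> phi s <= phi t) /\
    phi 0 = 0 /\ phi 1 = 1 /\
    (forall t, t \in `[0, 1] -> beta t = alpha (phi t)).

End Defs.

From HB Require Import structures.
From mathcomp Require Import all_boot all_order all_algebra.
From mathcomp Require Import all_classical all_reals all_analysis.
From mathcomp Require Import ring lra.
Import Order.TTheory GRing.Theory Num.Theory.
Import numFieldNormedType.Exports.
Local Open Scope classical_set_scope.
Local Open Scope ring_scope.
Set Implicit Arguments. Unset Strict Implicit. Unset Printing Implicit Defensive.

(* After normalisation, g_(P,Q) is a nondecreasing function of an affine
   functional, hence a monotone function of the parameter along the segment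
   alpha. By the intermediate value theorem every sample of alpha lifts to a
   sample of beta taking the same values in the same order, so
   o(alpha) <= o(beta).
   For strictness: a sorted sequence in [-1, 1] changes sign at most once, so
   when g_(P,Q) o alpha is nondecreasing its oscillation is at most
   max(0, -g(alpha 0) g(alpha 1)), while a path meeting Q at time s and P at
   a later time t has the sample 0, s, t, 1 of value 1 + g(beta 1) - g(beta 0),
   which is larger.
   If beta leaves the line of alpha, take P through that line and Q through
   the point, both orthogonal to its offset from the line; if beta stays on
   the line but moves backwards, take P and Q orthogonal to the line through
   the two points. Otherwise beta runs monotonically along the segment, and
   composing with the inverse of alpha exhibits it as a reparametrization. *)

Section Oscillation.
Variable R : realType.
Implicit Types (a b : R) (F g A B : R -> R) (s : seq R).

Fixpoint osc_sum s : R :=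
  if s is x :: ((y :: _) as s') then - (x * y) + osc_sum s' else 0.

Lemma big_osc_sum F s :
  \sum_(i < (size s).-1) - (F (nth 0 s i) * F (nth 0 s i.+1)) = osc_sum (map F s).
Proof.
elim: s => [|x [|y s] IH]; rewrite ?big_ord0 //.
rewrite big_ord_recl -[RHS]/(- (F x * F y) + osc_sum (map F (y :: s))) -IH.
by congr (_ + _); apply: eq_bigr => i _; rewrite add0n.
Qed.

Definition samples a b : set (seq R) :=
  [set s | sorted <=%R s /\ all (fun t => a <= t <= b) s].

Definition osc a b F : \bar R :=
  ereal_sup [set (osc_sum (map F s))%:E | s in samples a b].

Lemma oscillationE n a b (f : R -> 'rV[R]_n.+1) (G : 'rV[R]_n.+1 -> R) :
  oscillation a b f G = osc a b (G \o f).
Proof.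
by congr ereal_sup; apply: eq_imagel => s _; rewrite -big_osc_sum.
Qed.

Lemma lift_sorted_values B r b (us : seq R) :
  r <= b -> {within `[r, b], continuous B} -> sorted <=%R us ->
  {in us, forall u, B r <= u <= B b} ->
  exists rs, [/\ sorted <=%R rs, all (fun t => r <= t <= b) rs & map B rs = us].
Proof.
elim: us r => [|u us IH] r rb cB us_sorted us_range; first by exists [::].
have /andP[Bru uBb] := us_range u (mem_head _ _).
have [c /[!in_itv]/= /andP[rc cb] Bc] : exists2 c, c \in `[r, b] & B c = u.
  apply: IVT => //; rewrite (min_idPl (le_trans Bru uBb)).
  by rewrite (max_idPr (le_trans Bru uBb)) Bru.
have cB' : {within `[c, b], continuous B}.
  by apply: continuous_subspaceW cB; apply: subset_itvr; rewrite bnd_simp.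
move: us_sorted; rewrite /= (path_sortedE le_trans) => /andP[u_le us_sorted].
have [rs [rs_sorted rs_range rsE]] : exists rs,
    [/\ sorted <=%R rs, all (fun t => c <= t <= b) rs & map B rs = us].
  apply: IH => // v v_us; rewrite Bc (allP u_le v v_us).
  by case/andP: (us_range v (mem_behead (s := u :: us) v_us)).
exists (c :: rs); split; last by rewrite /= Bc rsE.
- rewrite /= (path_sortedE le_trans) rs_sorted andbT.
  by apply/allP => t /(allP rs_range) /andP[].
- rewrite /= rc cb /=; apply/allP => t /(allP rs_range) /andP[ct ->].
  by rewrite (le_trans rc ct).
Qed.

Lemma osc_le_homo g A B a b : a <= b ->
  {in `[a, b] &, {homo A : x y / x <= y}} -> {within `[a, b], continuous B} ->
  A a = B a -> A b = B b -> (osc a b (g \o A) <= osc a b (g \o B))%E.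
Proof.
move=> ab A_homo cB Aa Ab; apply: ge_ereal_sup => _ [s [s_sorted s_range] <-].
have A_range : {in s, forall t, A t \in `[B a, B b]}.
  move=> t /(allP s_range) /andP[ta tb]; rewrite -Aa -Ab in_itv /=.
  by rewrite !A_homo ?in_itv /= ?lexx ?ta ?tb ?(le_trans ta tb).
have [rs [rs_sorted rs_range rsE]] : exists rs,
    [/\ sorted <=%R rs, all (fun t => a <= t <= b) rs & map B rs = map A s].
  apply: lift_sorted_values => //.
    apply: homo_sorted_in s_sorted => //.
    by move=> x y /(allP s_range) x_in /(allP s_range) y_in; apply: A_homo; rewrite in_itv.
  by move=> _ /mapP[t t_s ->]; have := A_range t t_s; rewrite in_itv.
apply: ereal_sup_ubound; exists rs => //.
by rewrite /= (map_comp g B) rsE -map_comp.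
Qed.

Lemma osc_le_monotone g A B a b : a <= b ->
  {in `[a, b] &, {homo A : x y / x <= y}} \/ {in `[a, b] &, {homo A : x y /~ x <= y}} ->
  {within `[a, b], continuous B} ->
  A a = B a -> A b = B b -> (osc a b (g \o A) <= osc a b (g \o B))%E.
Proof.
move=> ab [A_homo|A_nhomo] cB Aa Ab; first exact: osc_le_homo.
have gN (C : R -> R) : g \o C = (g \o -%R) \o (-%R \o C).
  by apply/funext => t /=; rewrite opprK.
rewrite (gN A) (gN B); apply: osc_le_homo => //=.
- by move=> x y x_in y_in xy; rewrite lerN2; exact: A_nhomo.
- by apply: within_continuous_comp => // x _; exact: opp_continuous.
- by rewrite Aa.
- by rewrite Ab.
Qed.

Lemma osc_sum_le0 s : all (>= 0) s -> osc_sum s <= 0.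
Proof.
elim: s => [|x [|y s] IH] //= /andP[x_ge0 /[dup] ys_ge0 /andP[y_ge0 _]].
by rewrite -[X in _ <= X]addr0 lerD ?IH // oppr_le0 mulr_ge0.
Qed.

Lemma osc_sum_sorted_le lo hi s : sorted <=%R s ->
  {in s, forall u, lo <= u <= hi} -> osc_sum s <= Num.max 0 (- (lo * hi)).
Proof.
have le_max0 (r : R) : r <= 0 -> r <= Num.max 0 (- (lo * hi)).
  by move=> r_le0; rewrite le_max r_le0.
have nonneg_tail (x : R) t : path <=%R x t -> 0 <= x -> all (>= 0) (x :: t).
  move=> /(order_path_min le_trans) x_le x_ge0.
  by apply/allP => z /predU1P[->|/(allP x_le)]; last exact: le_trans.
elim: s => [|x [|y s] IH] s_sorted s_range; try exact: le_max0.
have [x_ge0|x_lt0] := leP 0 x; first by apply/le_max0/osc_sum_le0/nonneg_tail.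
rewrite -[osc_sum _]/(- (x * y) + osc_sum (y :: s)).
have /andP[lo_x _] := s_range x (mem_head _ _).
have /andP[_ y_hi] : lo <= y <= hi by apply: s_range; rewrite !inE eqxx orbT.
move: s_sorted => /= /andP[xy ys_sorted].
have [y_ge0|y_lt0] := leP 0 y.
  apply: (@le_trans _ _ (- (lo * hi) + 0)); last by rewrite addr0 le_max lexx orbT.
  have tail_le0 : osc_sum (y :: s) <= 0 by apply/osc_sum_le0/nonneg_tail.
  apply: lerD tail_le0; rewrite lerN2.
  have lo_le0 : lo <= 0 by apply: le_trans lo_x (ltW x_lt0).
  exact: le_trans (ler_wnM2l lo_le0 y_hi) (ler_wpM2r y_ge0 lo_x).
rewrite -[Num.max _ _]add0r lerD ?IH //; first nra.
by move=> u u_in; apply: s_range; rewrite inE u_in orbT.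
Qed.

Lemma osc_le_max0 F a b : {in `[a, b] &, {homo F : x y / x <= y}} ->
  (osc a b F <= (Num.max 0 (- (F a * F b)))%:E)%E.
Proof.
move=> F_homo; apply: ge_ereal_sup => _ [s [s_sorted s_range] <-].
have s_in : {in s, forall t, t \in `[a, b]}.
  by move=> t /(allP s_range); rewrite in_itv.
rewrite lee_fin osc_sum_sorted_le //.
  apply: (homo_sorted_in (P := mem s)) s_sorted => //.
  by move=> x y /s_in x_in /s_in y_in; exact: F_homo.
move=> _ /mapP[t /s_in t_in ->]; move: (t_in); rewrite in_itv /= => /andP[ta tb].
by rewrite !F_homo // in_itv /= ?lexx ?(le_trans ta tb).
Qed.

Lemma osc_lt_swing (phi psi : R -> R) a (s t : R) b : a <= s -> s <= t -> t <= b ->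
  {in `[a, b] &, {homo phi : x y / x <= y}} -> -1 <= phi a -> phi b <= 1 ->
  psi a = phi a -> psi b = phi b -> psi s = 1 -> psi t = -1 ->
  (osc a b phi < osc a b psi)%E.
Proof.
move=> a_s s_t t_b phi_homo phia_ge phib_le psia psib psis psit.
have ab : a <= b by rewrite (le_trans a_s) // (le_trans s_t).
apply: le_lt_trans (osc_le_max0 phi_homo) _.
apply: (@lt_le_trans _ _ (osc_sum [:: psi a; psi s; psi t; psi b])%:E).
  have phiab : phi a <= phi b by rewrite phi_homo // in_itv /= lexx ab.
  rewrite lte_fin /= psia psib psis psit gt_max; apply/andP; split; nra.
apply: ereal_sup_ubound; exists [:: a; s; t; b] => //; split.
  by rewrite /= a_s s_t t_b.
by rewrite /= !lexx ab a_s (le_trans s_t t_b) (le_trans a_s s_t) t_b.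
Qed.

End Oscillation.

Section Dot.
Variables (R : realType) (n : nat).
Notation pt := 'rV[R]_n.+1.
Implicit Types (x y z v w : pt).

Lemma dotvE x y : dotv x y = \sum_j x 0 j * y 0 j.
Proof. by rewrite /dotv mxE; apply: eq_bigr => j _; rewrite mxE. Qed.

Lemma dotvC x y : dotv x y = dotv y x.
Proof. by rewrite !dotvE; apply: eq_bigr => j _; rewrite mulrC. Qed.

Lemma dotvDl x y z : dotv (x + y) z = dotv x z + dotv y z.
Proof. by rewrite /dotv mulmxDl mxE. Qed.

Lemma dotvZl a x y : dotv (a *: x) y = a * dotv x y.
Proof. by rewrite /dotv -scalemxAl mxE. Qed.

Lemma dotvNl x y : dotv (- x) y = - dotv x y.
Proof. by rewrite -scaleN1r dotvZl mulN1r. Qed.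

Lemma dotvBl x y z : dotv (x - y) z = dotv x z - dotv y z.
Proof. by rewrite dotvDl dotvNl. Qed.

Lemma dotvZr a x y : dotv x (a *: y) = a * dotv x y.
Proof. by rewrite dotvC dotvZl dotvC. Qed.

Lemma dotvNr x y : dotv x (- y) = - dotv x y.
Proof. by rewrite dotvC dotvNl dotvC. Qed.

Lemma dotvDr x y z : dotv x (y + z) = dotv x y + dotv x z.
Proof. by rewrite dotvC dotvDl !(dotvC x). Qed.

Lemma dotvBr x y z : dotv x (y - z) = dotv x y - dotv x z.
Proof. by rewrite dotvDr dotvNr. Qed.

Lemma dotv_gt0 x : x != 0 -> 0 < dotv x x.
Proof.
move=> x_neq0; have sq_ge0 j : 0 <= x 0 j * x 0 j by rewrite -expr2 sqr_ge0.
rewrite lt_def dotvE sumr_ge0 // andbT; apply: contra x_neq0 => /eqP sum0.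
apply/eqP/rowP => j; rewrite mxE.
have /eqP := psumr_eq0P (fun j _ => sq_ge0 j) sum0 (i := j) isT.
by rewrite mulf_eq0 orbb => /eqP.
Qed.

Lemma dotv_delta x : dotv x (delta_mx 0 0) = coord1 x.
Proof.
rewrite dotvE (bigD1 0) //= big1 ?addr0 => [|j /negbTE j0]; rewrite mxE.
  by rewrite !eqxx mulr1.
by rewrite j0 andbF mulr0.
Qed.

Lemma dotv_continuous y : continuous (fun x : pt => dotv x y).
Proof.
have sum_cont k (F : 'I_k -> pt -> R) :
    (forall j, continuous (F j)) -> continuous (fun x => \sum_(j < k) F j x).
  move=> F_cont; rewrite -fct_sumE.
  apply: (big_ind (fun f : pt -> R => continuous f)) => //.
    by move=> x; apply: cst_continuous.
  by move=> f g cf cg x; exact: (continuousD (cf x) (cg x)).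
rewrite (funext (dotvE ^~ y)); apply: sum_cont => j x.
have cst_cont : {for x, continuous (fun _ : pt => y 0 j)} by exact: cst_continuous.
exact: (continuousM (@coord_continuous R 1 n.+1 0 j x) cst_cont).
Qed.

Lemma within_continuous_dotv (A : set R) (f : R -> pt) y :
  {within A, continuous f} -> {within A, continuous (fun t => dotv (f t) y)}.
Proof.
move=> f_cont; apply: (@within_continuous_comp _ _ _ A f (fun x : pt => dotv x y)) => //.
by move=> x _; exact: dotv_continuous.
Qed.

End Dot.

Section Profile.
Variable R : realType.
Implicit Types x y : R.

Lemma gprof_homo : {homo @gprof R : x y / x <= y}.
Proof. by move=> x y xy; rewrite /gprof; do ![case: ifPn; rewrite -?ltNge => ?]; lra. Qed.

Lemma gprof_ge x : -1 <= gprof x.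
Proof. by rewrite /gprof; do ![case: ifPn; rewrite -?ltNge => ?]; lra. Qed.

Lemma gprof_le x : gprof x <= 1.
Proof. by rewrite /gprof; do ![case: ifPn; rewrite -?ltNge => ?]; lra. Qed.

Lemma gprofN3 : gprof (-3 : R) = -1.
Proof. by rewrite /gprof lexx. Qed.

Lemma gprof3 : gprof (3 : R) = 1.
Proof. by rewrite /gprof; do ![case: ifPn; rewrite -?ltNge => ?]; lra. Qed.

End Profile.

Section Normalization.
Variables (R : realType) (n : nat).
Notation pt := 'rV[R]_n.+1.
Implicit Types (x y v w : pt) (h : pt -> pt) (P Q : set pt).

Lemma similarity_coord1 h :
  similarity h -> exists W k, forall x, coord1 (h x) = dotv x W + k.
Proof.
move=> [c [U [t [_ [_ ->]]]]]; exists (c *: (col 0 U)^T), (t 0 0) => x.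
rewrite /coord1 !mxE dotvZr dotvE; congr (c * _ + _).
by apply: eq_bigr => j _; rewrite !mxE.
Qed.

Lemma similarity_surj h : similarity h -> forall y, exists x, h x = y.
Proof.
move=> [c [U [t [c_gt0 [U_orth ->]]]]] y; exists ((c^-1 *: (y - t)) *m U^T).
by rewrite -mulmxA (mulmx1C U_orth) mulmx1 scalerA mulfV ?gt_eqF // scale1r subrK.
Qed.

Lemma similarity_image_level_set h v (phi : R -> R) a :
  similarity h -> injective phi -> (forall x, coord1 (h x) = phi (dotv x v)) ->
  h @` [set x | dotv x v = a] = [set y | coord1 y = phi a].
Proof.
move=> h_sim phi_inj h_coord; apply/seteqP; split => [_ [x xa <-]|y ya] /=.
  by rewrite h_coord xa.
have [x hx] := similarity_surj h_sim y.
by exists x => //=; apply: phi_inj; rewrite -h_coord hx.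
Qed.

Lemma orthogonal_mx_coord1 w : dotv w w = 1 ->
  exists U, orthogonal_mx U /\ forall x, coord1 (x *m U) = dotv x w.
Proof.
move=> ww; set e : pt := delta_mx 0 0.
(* the Householder reflection exchanging e and w *)
have [->|w_neq_e] := eqVneq w e.
  by exists 1; split => [|x]; rewrite ?/orthogonal_mx ?trmx1 ?mulmx1 // dotv_delta.
set u := w - e; set k := 2 / dotv u u; set M := u^T *m u.
have u_neq0 : u != 0 by rewrite subr_eq0.
have ee : dotv e e = 1 by rewrite dotv_delta /coord1 mxE.
have uu : dotv u u = 2 - 2 * coord1 w.
  by rewrite /u dotvBl !dotvBr ww ee (dotvC e) dotv_delta; lra.
have uu_neq0 : dotv u u != 0 by rewrite gt_eqF ?dotv_gt0.
have xM x : x *m M = dotv x u *: u by rewrite /M mulmxA [x *m _]mx11_scalar mul_scalar_mx.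
have MM : M *m M = dotv u u *: M by rewrite {1}/M -mulmxA xM scalemxAr.
have MT : M^T = M by rewrite /M trmx_mul trmxK.
exists (1 - k *: M); split.
  rewrite /orthogonal_mx raddfB /= trmx1 [(k *: M)^T]linearZ /= MT.
  rewrite mulmxBl mul1mx mulmxBr mulmx1.
  rewrite -scalemxAl -scalemxAr MM !scalerA.
  have -> : k * k * dotv u u = k + k by rewrite -mulrA {2}/k divfK // mulr_natr mulr2n.
  by rewrite scalerDl opprB addrK subrK.
have k_u00 : k * u 0 0 = -1.
  have u00 : u 0 0 = coord1 w - 1 by rewrite /u /coord1 !mxE.
  have w00_neq1 : 2 - 2 * coord1 w != 0 by rewrite -uu.
  by rewrite /k uu u00; field.
move=> x; rewrite mulmxBr mulmx1 -scalemxAr xM.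
have -> : dotv x w = coord1 x + dotv x u by rewrite /u dotvBr dotv_delta addrC subrK.
have -> : coord1 (x - k *: (dotv x u *: u)) = coord1 x - k * (dotv x u * u 0 0).
  by rewrite /coord1 !mxE.
by rewrite mulrCA k_u00 mulrN1 opprK.
Qed.

Lemma normalizes_exists_lt v a b : v != 0 -> a < b ->
  exists h, normalizes [set x | dotv x v = a] [set x | dotv x v = b] h.
Proof.
move=> v_neq0 ab; set r := Num.sqrt (dotv v v).
have r_gt0 : 0 < r by rewrite sqrtr_gt0 dotv_gt0.
have ba_neq0 : b - a != 0 by rewrite subr_eq0 gt_eqF.
have [U [U_orth U_coord]] : exists U, orthogonal_mx U /\
    forall x, coord1 (x *m U) = dotv x (r^-1 *: v).
  apply: orthogonal_mx_coord1; rewrite dotvZl dotvZr mulrA -invfM -expr2.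
  by rewrite sqr_sqrtr ?mulVf ?gt_eqF ?dotv_gt0 // ltW ?dotv_gt0.
set c := 6 * r / (b - a); set t : pt := const_mx (-3 - 6 * a / (b - a)).
set phi := fun z => -3 + 6 * ((z - a) / (b - a)).
have h_sim : similarity (fun x => c *: (x *m U) + t).
  by exists c, U, t; split => //; rewrite divr_gt0 ?mulr_gt0 ?subr_gt0.
have h_coord x : coord1 (c *: (x *m U) + t) = phi (dotv x v).
  have -> : coord1 (c *: (x *m U) + t) = c * coord1 (x *m U) + t 0 0.
    by rewrite /coord1 !mxE.
  by rewrite U_coord dotvZr /c /t /phi mxE; field; rewrite ba_neq0 gt_eqF.
have phi_inj : injective phi.
  have six_neq0 : (6 : R) != 0 by rewrite pnatr_eq0.
  by move=> z1 z2 /addrI/(mulfI six_neq0)/(mulIf (invr_neq0 ba_neq0))/addIr.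
exists (fun x => c *: (x *m U) + t); split => //.
rewrite !(similarity_image_level_set _ h_sim phi_inj h_coord).
suff [-> ->] : phi a = -3 /\ phi b = 3 by [].
by rewrite /phi subrr mul0r divff // mulr0 mulr1 addr0; split => //; lra.
Qed.

Lemma normalizes_exists P Q :
  distinct_parallel_hyperplanes P Q -> exists h, normalizes P Q h.
Proof.
move=> [v [a [b [v_neq0 [a_neq_b [-> ->]]]]]].
have [ab|ba|eq_ab] := ltgtP a b; last by rewrite eq_ab eqxx in a_neq_b.
  exact: normalizes_exists_lt.
have level_oppr c : [set x | dotv x v = c] = [set x | dotv x (- v) = - c].
  by apply/seteqP; split => x /=; rewrite dotvNr; [move=> -> | move/oppr_inj].
by rewrite !level_oppr; apply: normalizes_exists_lt; rewrite ?oppr_eq0 ?ltrN2.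
Qed.

Lemma normalizes_coord1_P P Q h x : normalizes P Q h -> P x -> coord1 (h x) = -3.
Proof.
move=> [_ [hP _]] Px; have : (h @` P) (h x) by exists x.
by rewrite hP.
Qed.

Lemma normalizes_coord1_Q P Q h x : normalizes P Q h -> Q x -> coord1 (h x) = 3.
Proof.
move=> [_ [_ hQ]] Qx; have : (h @` Q) (h x) by exists x.
by rewrite hQ.
Qed.

Lemma gPQ_P P Q h x : normalizes P Q h -> P x -> gPQ h x = -1.
Proof. by move=> hn Px; rewrite /gPQ (normalizes_coord1_P hn Px) gprofN3. Qed.

Lemma gPQ_Q P Q h x : normalizes P Q h -> Q x -> gPQ h x = 1.
Proof. by move=> hn Qx; rewrite /gPQ (normalizes_coord1_Q hn Qx) gprof3. Qed.

Lemma gPQ_homo_normal v a b h x : v != 0 -> a < b ->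
  normalizes [set y | dotv y v = a] [set y | dotv y v = b] h ->
  {homo (fun mu => gPQ h (x + mu *: v)) : mu nu / mu <= nu}.
Proof.
move=> v_neq0 ab hn; have [W [k hW]] := similarity_coord1 hn.1.
have vv_neq0 : dotv v v != 0 by rewrite gt_eqF ?dotv_gt0.
have on_level c : dotv ((c / dotv v v) *: v) v = c by rewrite dotvZl mulfVK.
have := normalizes_coord1_Q hn (on_level b); have := normalizes_coord1_P hn (on_level a).
rewrite !hW !dotvZl => Pa Qb.
have slope : (b - a) / dotv v v * dotv v W = 6 by rewrite mulrBl mulrBl; lra.
have vW_gt0 : 0 < dotv v W.
  by rewrite -(@pmulr_rgt0 _ ((b - a) / dotv v v)) ?slope ?divr_gt0 ?subr_gt0 ?dotv_gt0.
move=> mu nu mu_nu; apply: gprof_homo; rewrite !hW !dotvDl !dotvZl lerD2r lerD2l.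
by rewrite ler_wpM2r // ltW.
Qed.

End Normalization.

Lemma within_continuous_comp_in {T U V : topologicalType} (A : set T) (B : set U)
    (f : T -> U) (g : U -> V) :
  {within A, continuous f} -> {within B, continuous g} -> (forall x, A x -> B (f x)) ->
  {within A, continuous (g \o f)}.
Proof.
move=> /subspace_continuousP f_cont /subspace_continuousP g_cont AB.
apply/subspace_continuousP => x Ax S /= /(g_cont _ (AB x Ax)) /(f_cont x Ax) near_x.
have near_x' : \forall y \near x, A y -> B (f y) -> S (g (f y)) := near_x.
have : \forall y \near x, A y -> S (g (f y)).
  by apply: filterS near_x' => y gfyS Ay; exact: gfyS Ay (AB y Ay).
exact.
Qed.

Section Line.
Variables (R : realType) (n : nat).
Notation pt := 'rV[R]_n.+1.
Implicit Types (p d x : pt).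

Definition line_coord p d x : R := dotv (x - p) d / dotv d d.

Lemma line_coordK p d mu : d != 0 -> line_coord p d (p + mu *: d) = mu.
Proof.
by move=> d_neq0; rewrite /line_coord addrC addKr dotvZl mulfK // gt_eqF ?dotv_gt0.
Qed.

Lemma within_continuous_line_coord (A : set R) (f : R -> pt) p d :
  {within A, continuous f} -> {within A, continuous (fun t => line_coord p d (f t))}.
Proof.
move=> f_cont.
have -> : (fun t => line_coord p d (f t)) =
    (fun r => (r - dotv p d) / dotv d d) \o (fun t => dotv (f t) d).
  by apply/funext => t; rewrite /line_coord /= dotvBl.
apply: within_continuous_comp; last exact: within_continuous_dotv.
move=> r _; have id_cont : {for r, continuous (fun x : R => x)} by exact: cvg_id.
have cst_cont (c : R) : {for r, continuous (fun=> c)} by exact: cst_continuous.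
exact: (continuousM (continuousB id_cont (cst_cont _)) (cst_cont _)).
Qed.

Lemma segment_param_on_line (alpha : R -> pt) : segment_param alpha ->
  alpha 1 - alpha 0 != 0 /\
  {in `[0, 1], forall t, alpha t =
     alpha 0 + line_coord (alpha 0) (alpha 1 - alpha 0) (alpha t) *: (alpha 1 - alpha 0)}.
Proof.
move=> [[p [q img]] alpha_inj].
have on_seg t : t \in `[0, 1] -> exists s, alpha t = p + s *: (q - p).
  move=> t01; have : (alpha @` `[0, 1]) (alpha t) by exists t.
  rewrite img => -[s _ <-]; exists s.
  by rewrite scalerBl scale1r scalerBr addrAC addrA.
have [I0 I1] : (0 : R) \in `[0, 1] /\ (1 : R) \in `[0, 1].
  by split; rewrite in_itv /= lexx ler01.
have [[s0 e0] [s1 e1]] := (on_seg 0 I0, on_seg 1 I1).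
have d_eq : alpha 1 - alpha 0 = (s1 - s0) *: (q - p).
  by rewrite e0 e1 opprD addrACA subrr add0r scalerBl.
have d_neq0 : alpha 1 - alpha 0 != 0.
  by apply: contra_neq (@oner_neq0 R) => /subr0_eq/alpha_inj; apply.
split => // t /on_seg[s e].
have s10_neq0 : s1 - s0 != 0 by apply: contraNneq d_neq0 => s10; rewrite d_eq s10 scale0r.
have -> : alpha t = alpha 0 + ((s - s0) / (s1 - s0)) *: (alpha 1 - alpha 0).
  by rewrite d_eq scalerA divfK // e e0 scalerBl -addrA [s0 *: _ + _]addrC subrK.
by rewrite line_coordK.
Qed.

End Line.

Section SegmentVersusPath.
Variables (R : realType) (n : nat).
Notation pt := 'rV[R]_n.+1.
Variables (alpha beta : R -> pt).
Hypotheses (beta0 : beta 0 = alpha 0) (beta1 : beta 1 = alpha 1).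

Definition osc_lt_pair (P Q : set pt) : Prop :=
  distinct_parallel_hyperplanes P Q /\ (exists h, normalizes P Q h) /\
  forall h, normalizes P Q h ->
    (oscillation 0 1 alpha (gPQ h) < oscillation 0 1 beta (gPQ h))%E.

Lemma osc_lt_pair_of_swing P Q s t :
  distinct_parallel_hyperplanes P Q ->
  (forall h, normalizes P Q h -> {in `[0, 1] &, {homo gPQ h \o alpha : x y / x <= y}}) ->
  0 <= s -> s <= t -> t <= 1 -> Q (beta s) -> P (beta t) -> osc_lt_pair P Q.
Proof.
move=> PQ G_homo s0 st t1 Qs Pt; split => //; split; first exact: normalizes_exists.
move=> h hn; rewrite !oscillationE.
apply: (osc_lt_swing s0 st t1 (G_homo h hn));
  rewrite /= ?gprof_ge ?gprof_le ?beta0 ?beta1 //.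
- exact: gPQ_Q hn Qs.
- exact: gPQ_P hn Pt.
Qed.

Variables (p d : pt) (tau : R -> R).
Hypotheses (d_neq0 : d != 0)
  (alphaE : {in `[0, 1], forall t, alpha t = p + tau t *: d})
  (tau_cont : {within `[0, 1], continuous tau})
  (alpha_inj : {in `[0, 1] &, injective alpha})
  (tau0 : tau 0 = 0) (tau1 : tau 1 = 1)
  (beta_cont : {within `[0, 1], continuous beta}).

Let I0 : (0 : R) \in `[0, 1]. Proof. by rewrite in_itv /= lexx ler01. Qed.
Let I1 : (1 : R) \in `[0, 1]. Proof. by rewrite in_itv /= lexx ler01. Qed.

Let tau_inj : {in `[0, 1] &, injective tau}.
Proof. by move=> x y x01 y01 tau_xy; apply: alpha_inj; rewrite // !alphaE // tau_xy. Qed.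

Let tau_mono : {in `[0, 1] &, {mono tau : x y / x <= y}}.
Proof. by apply: segment_continuous_inj_le; rewrite ?tau0 ?tau1 ?ler01. Qed.

Let alpha0 : alpha 0 = p. Proof. by rewrite alphaE // tau0 scale0r addr0. Qed.
Let alpha1 : alpha 1 = p + d. Proof. by rewrite alphaE // tau1 scale1r. Qed.

Lemma osc_segment_le h : similarity h ->
  (oscillation 0 1 alpha (gPQ h) <= oscillation 0 1 beta (gPQ h))%E.
Proof.
move=> h_sim; have [W [k hW]] := similarity_coord1 h_sim.
have G_comp f : gPQ h \o f = (fun r => gprof (r + k)) \o (fun t => dotv (f t) W).
  by apply/funext => t; rewrite /= /gPQ hW.
rewrite !oscillationE !G_comp; apply: osc_le_monotone.
- exact: ler01.
- have alphaW x : x \in `[0, 1] -> dotv (alpha x) W = dotv p W + tau x * dotv d W.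
    by move=> x01; rewrite alphaE // dotvDl dotvZl.
  have [dW|dW] := leP 0 (dotv d W); [left|right] => x y x01 y01 xy;
    rewrite !alphaW // lerD2l; [apply: (ler_wpM2r dW) | apply: (ler_wnM2r (ltW dW))];
    by rewrite tau_mono.
- exact: within_continuous_dotv.
- by rewrite beta0.
- by rewrite beta1.
Qed.

Lemma osc_lt_pair_off_line t0 : t0 \in `[0, 1] ->
  beta t0 != p + line_coord p d (beta t0) *: d -> exists P Q, osc_lt_pair P Q.
Proof.
move=> t01 off_line; set w := beta t0 - (p + line_coord p d (beta t0) *: d).
have dd_neq0 : dotv d d != 0 by rewrite gt_eqF ?dotv_gt0.
have dw : dotv d w = 0.
  rewrite dotvC /w dotvBl dotvDl dotvZl /line_coord divfK // dotvBl.
  by rewrite [dotv p d + _]addrC subrK subrr.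
have on_P x : dotv (p + x *: d) w = dotv p w by rewrite dotvDl dotvZl dw mulr0 addr0.
have pw_lt : dotv p w < dotv (beta t0) w.
  have : beta t0 - p = w + line_coord p d (beta t0) *: d by rewrite /w opprD addrA subrK.
  move/(congr1 (fun x => dotv x w)); rewrite /= dotvBl dotvDl dotvZl dw mulr0 addr0 => e.
  by rewrite -subr_gt0 e dotv_gt0 // subr_eq0.
exists [set x | dotv x w = dotv p w], [set x | dotv x w = dotv (beta t0) w].
move: t01; rewrite in_itv /= => /andP[t0_ge0 t0_le1].
apply: (osc_lt_pair_of_swing (s := t0) (t := 1)) => //=.
- by exists w, (dotv p w), (dotv (beta t0) w); rewrite subr_eq0 off_line (lt_eqF pw_lt).
- by move=> h hn x y x01 y01 _; rewrite /= !(gPQ_P hn) //= alphaE.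
- by rewrite beta1 alpha1 -[d]scale1r on_P.
Qed.

Lemma line_coord_ltr x y : (line_coord p d x < line_coord p d y) = (dotv x d < dotv y d).
Proof. by rewrite ltr_pM2r ?invr_gt0 ?dotv_gt0 // !dotvBl ltrD2r. Qed.

Lemma osc_lt_pair_backtrack s t : 0 <= s -> s <= t -> t <= 1 ->
  line_coord p d (beta t) < line_coord p d (beta s) -> exists P Q, osc_lt_pair P Q.
Proof.
rewrite line_coord_ltr => s0 st t1 lt_ts.
exists [set x | dotv x d = dotv (beta t) d], [set x | dotv x d = dotv (beta s) d].
apply: (osc_lt_pair_of_swing (s := s) (t := t)) => //.
  by exists d, (dotv (beta t) d), (dotv (beta s) d); rewrite d_neq0 (lt_eqF lt_ts).
move=> h hn x y x01 y01 xy; rewrite /= !alphaE //.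
by apply: (gPQ_homo_normal _ d_neq0 lt_ts hn); rewrite tau_mono.
Qed.

Lemma reparam_of_on_line_homo :
  {in `[0, 1], forall t, beta t = p + line_coord p d (beta t) *: d} ->
  {in `[0, 1] &, {homo (fun t => line_coord p d (beta t)) : x y / x <= y}} ->
  reparam_of beta alpha.
Proof.
set sigma := fun t => line_coord p d (beta t) => betaE sigma_homo.
have sigma0 : sigma 0 = 0.
  by rewrite /sigma beta0 alpha0 -[X in line_coord _ _ X](addr0 p) -(scale0r d) line_coordK.
have sigma1 : sigma 1 = 1.
  by rewrite /sigma beta1 alpha1 -[X in _ + X](scale1r d) line_coordK.
have sigma01 t : t \in `[0, 1] -> sigma t \in `[0, 1].
  move=> t01; have := t01; rewrite !in_itv /= => /andP[t0 t1].
  by rewrite -sigma0 -sigma1 !sigma_homo.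
pose g := 'pinv_(fun=> 0) `[0, 1] tau.
have tauK : {in `[0, 1], cancel tau g}.
  move=> x x01; apply: pinvKV; last by rewrite inE.
  by move=> u v; rewrite !inE; exact: tau_inj.
have gK y : y \in `[0, 1] -> tau (g y) = y /\ g y \in `[0, 1].
  move=> y01; have [x x01 <-] : exists2 x, x \in `[0, 1] & tau x = y.
    apply: IVT; rewrite ?ler01 // tau0 tau1 (min_idPl ler01) (max_idPr ler01).
    by move: y01; rewrite in_itv.
  by rewrite tauK.
exists (g \o sigma); split; last split; last split; last split.
- apply: (@within_continuous_comp_in R R R _ `[0, 1]).
  + exact: within_continuous_line_coord.
  + by have := segment_can_le_continuous ler01 tau_cont tauK; rewrite tau0 tau1.
  + by move=> t; exact: sigma01.
- move=> x y x01 y01 xy; have := segment_can_le ler01 tau_cont tauK.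
  by rewrite tau0 tau1 => g_mono; rewrite /= g_mono ?sigma01 ?sigma_homo.
- by rewrite /= sigma0 -tau0 tauK.
- by rewrite /= sigma1 -tau1 tauK.
- move=> t t01; have [tau_g g01] := gK _ (sigma01 t t01).
  by rewrite /= alphaE // tau_g betaE.
Qed.

Lemma osc_lt_pair_exists : ~ reparam_of beta alpha -> exists P Q, osc_lt_pair P Q.
Proof.
move=> not_reparam.
have [[t0 t01 off_line]|on_line] :=
  pselect (exists2 t, t \in `[0, 1] & beta t != p + line_coord p d (beta t) *: d).
  exact: osc_lt_pair_off_line off_line.
have [[s [t [s0 st t1 back]]]|forward] := pselect (exists s t,
    [/\ 0 <= s, s <= t, t <= 1 & line_coord p d (beta t) < line_coord p d (beta s)]).
  exact: osc_lt_pair_backtrack back.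
exfalso; apply/not_reparam/reparam_of_on_line_homo.
  by move=> t t01; apply/eqP; apply: contra_notT on_line => off_line; exists t.
move=> x y; rewrite !in_itv /= => /andP[x0 _] /andP[_ y1] xy.
by rewrite leNgt; apply/negP => back; apply: forward; exists x, y.
Qed.

End SegmentVersusPath.

Theorem lemma3p4 (R : realType) (n : nat) (X : set 'rV[R]_n.+1)
    (alpha beta : R -> 'rV[R]_n.+1) :
  path_in X alpha -> segment_param alpha ->
  path_in X beta -> beta 0 = alpha 0 -> beta 1 = alpha 1 ->
  (forall P Q : set 'rV[R]_n.+1, distinct_parallel_hyperplanes P Q ->
     forall h, normalizes P Q h ->
       (oscillation 0 1 alpha (gPQ h) <= oscillation 0 1 beta (gPQ h))%E) /\
  (~ reparam_of beta alpha ->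
     exists P Q : set 'rV[R]_n.+1, distinct_parallel_hyperplanes P Q /\
       (exists h, normalizes P Q h) /\
       forall h, normalizes P Q h ->
         (oscillation 0 1 alpha (gPQ h) < oscillation 0 1 beta (gPQ h))%E).
Proof.
move=> [alpha_cont _] alpha_seg [beta_cont _] beta0 beta1.
have [d_neq0 alphaE] := segment_param_on_line alpha_seg.
pose tau t := line_coord (alpha 0) (alpha 1 - alpha 0) (alpha t).
have tau_cont : {within `[0, 1], continuous tau} by exact: within_continuous_line_coord.
have alpha_inj : {in `[0, 1] &, injective alpha} by move=> x y; exact: alpha_seg.2.
have tau0 : tau 0 = 0 by rewrite /tau /line_coord dotvBl subrr mul0r.
have tau1 : tau 1 = 1 by rewrite /tau /line_coord divff // gt_eqF // dotv_gt0.
split => [P Q _ h [h_sim _]|].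
  exact: (osc_segment_le beta0 beta1 alphaE tau_cont alpha_inj tau0 tau1 beta_cont).
exact: (osc_lt_pair_exists beta0 beta1 d_neq0 alphaE tau_cont alpha_inj tau0 tau1
  beta_cont).
Qed.
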